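(* Let $(X,d^\star)$ be a complete $\star$-metric space and $M\subseteq X$ nonempty. Then the subspace $(M,d^\star|_{M\times M})$ is complete if and only if $M$ is closed in $X$.
   Context: A $t$-definer is a function $\star:[0,\infty)\times[0,\infty)\to[0,\infty)$ such that for all $a,b,c\ge 0$: $a\star b=b\star a$; $a\star(b\star c)=(a\star b)\star c$; if $a\le b$ then $a\star c\le b\star c$; $a\star 0=a$; and $\star$ is continuous in its first variable with respect to the Euclidean topology. Given a nonempty set $X$ and a $t$-definer $\star$, a $\star$-metric on $X$ is a function $d^\star:X\times X\to[0,\infty)$ such that for all $x,y,z\in X$: $d^\star(x,y)=0$ iff $x=y$; $d^\star(x,y)=d^\star(y,x)$; and $d^\star(x,y)\le d^\star(x,z)\star d^\star(z,y)$. Closedness refers to the topology consisting of all $U\subseteq X$ such that for each $a\in U$ there is $r>0$ with $\{x: d^\star(a,x)<r\}\subseteq U$. A sequence $\{x_n\}$ is Cauchy if for every $\epsilon>0$ there is $k$ with $d^\star(x_n,x_m)<\epsilon$ for all $m,n\ge k$; it converges to $x$ if for every $\epsilon>0$ there is $k$ with $d^\star(x,x_n)<\epsilon$ for $n\ge k$. A $\star$-metric space is complete if every Cauchy sequence in it converges to a point of the space. *)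

From Stdlib Require Import Reals.
Open Scope R_scope.

(* A t-definer: a binary operation on [0,oo), modelled as a function R -> R -> R
   whose axioms are imposed on nonnegative arguments. *)
Definition t_definer (star : R -> R -> R) : Prop :=
  (forall a b, 0 <= a -> 0 <= b -> 0 <= star a b) /\
  (forall a b, 0 <= a -> 0 <= b -> star a b = star b a) /\
  (forall a b c, 0 <= a -> 0 <= b -> 0 <= c ->
      star a (star b c) = star (star a b) c) /\
  (forall a b c, 0 <= a -> 0 <= b -> 0 <= c -> a <= b -> star a c <= star b c) /\
  (forall a, 0 <= a -> star a 0 = a) /\
  (forall b a, 0 <= b -> 0 <= a -> forall eps, 0 < eps ->
      exists delta, 0 < delta /\
        forall a', 0 <= a' -> Rabs (a' - a) < delta ->
          Rabs (star a' b - star a b) < eps).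

Definition star_metric {X : Type} (star : R -> R -> R) (d : X -> X -> R) : Prop :=
  (forall x y, 0 <= d x y) /\
  (forall x y, d x y = 0 <-> x = y) /\
  (forall x y, d x y = d y x) /\
  (forall x y z, d x y <= star (d x z) (d z y)).

Definition sm_open {X : Type} (d : X -> X -> R) (U : X -> Prop) : Prop :=
  forall a, U a -> exists r, 0 < r /\ forall x, d a x < r -> U x.

Definition sm_closed {X : Type} (d : X -> X -> R) (F : X -> Prop) : Prop :=
  sm_open d (fun x => ~ F x).

Definition sm_cauchy {X : Type} (d : X -> X -> R) (u : nat -> X) : Prop :=
  forall eps, 0 < eps -> exists k, forall m n, (k <= m)%nat -> (k <= n)%nat ->
    d (u n) (u m) < eps.

Definition sm_converges {X : Type} (d : X -> X -> R) (u : nat -> X) (x : X) : Prop :=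
  forall eps, 0 < eps -> exists k, forall n, (k <= n)%nat -> d x (u n) < eps.

Definition sm_complete {X : Type} (d : X -> X -> R) : Prop :=
  forall u : nat -> X, sm_cauchy d u -> exists x, sm_converges d u x.

Definition restrict_metric {X : Type} (M : X -> Prop) (d : X -> X -> R)
  : {x | M x} -> {x | M x} -> R :=
  fun p q => d (proj1_sig p) (proj1_sig q).

(* The only analytic input is that [s ⋆ t] is small when [s] and [t] are: by
   continuity of ⋆ in its first variable at [0] and [0 ⋆ t = t].  With it, the
   ⋆-triangle inequality shows, exactly as for metrics, that limits are unique
   and convergent sequences are Cauchy, and closedness is sequential closedness.
   A complete subspace then contains the limit of every sequence from it, and
   conversely a Cauchy sequence of [M] converges in [X] to a point which,
   [M] being closed, lies in [M]. *)

From Stdlib Require Import Reals Lra Lia Classical ClassicalEpsilon.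
Open Scope R_scope.

Set Implicit Arguments.

Lemma t_definer_small (star : R -> R -> R) : t_definer star ->
  forall eps, 0 < eps -> exists e, 0 < e /\
    forall s t, 0 <= s -> s < e -> 0 <= t -> t < e -> star s t < eps.
Proof.
  intros [_ [Hcomm [_ [Hmono [Hzero Hcont]]]]] eps Heps.
  destruct (Hcont (eps / 2) 0 ltac:(lra) ltac:(lra) (eps / 2) ltac:(lra))
    as [delta [Hdelta Hclose]].
  exists (Rmin delta (eps / 2)); split; [apply Rmin_pos; lra|].
  intros s t Hs Hs_lt Ht Ht_lt.
  pose proof (Rmin_l delta (eps / 2)); pose proof (Rmin_r delta (eps / 2)).
  assert (Hst : star s t <= star s (eps / 2)).
  { rewrite (Hcomm s t), (Hcomm s (eps / 2)) by lra. apply Hmono; lra. }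
  assert (Hs_half : Rabs (star s (eps / 2) - star 0 (eps / 2)) < eps / 2).
  { apply Hclose; [lra|]. rewrite Rminus_0_r, Rabs_right; lra. }
  rewrite (Hcomm 0 (eps / 2)), Hzero in Hs_half by lra.
  apply Rabs_def2 in Hs_half. lra.
Qed.

Lemma inv_INR_S_eventually_lt (eps : R) : 0 < eps ->
  exists N, forall n, (N <= n)%nat -> / INR (S n) < eps.
Proof.
  intros Heps. destruct (archimed_cor1 eps Heps) as [N [HN HN_pos]].
  exists N. intros n Hn. eapply Rle_lt_trans; [|exact HN].
  apply Rinv_le_contravar; [apply lt_0_INR; lia | apply le_INR; lia].
Qed.

Section StarMetric.

Variables (X : Type) (star : R -> R -> R) (d : X -> X -> R).
Hypothesis Hstar : t_definer star.
Hypothesis Hd : star_metric star d.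

Lemma sm_converges_cauchy (u : nat -> X) (x : X) :
  sm_converges d u x -> sm_cauchy d u.
Proof.
  destruct Hd as [Hpos [_ [Hsym Htri]]].
  intros Hux eps Heps.
  destruct (t_definer_small Hstar Heps) as [e [He Hsmall]].
  destruct (Hux e He) as [k Hk].
  exists k. intros m n Hm Hn.
  eapply Rle_lt_trans; [apply (Htri _ _ x)|].
  rewrite (Hsym _ x). apply Hsmall; auto.
Qed.

Lemma sm_converges_unique (u : nat -> X) (x y : X) :
  sm_converges d u x -> sm_converges d u y -> x = y.
Proof.
  destruct Hd as [Hpos [Hzero [Hsym Htri]]].
  intros Hux Huy. apply Hzero, Rle_antisym; [|apply Hpos].
  apply Rnot_lt_le. intros Hxy.
  destruct (t_definer_small Hstar Hxy) as [e [He Hsmall]].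
  destruct (Hux e He) as [k Hk]; destruct (Huy e He) as [l Hl].
  assert (Hlt : star (d x (u (max k l))) (d (u (max k l)) y) < d x y).
  { rewrite (Hsym _ y). apply Hsmall; auto; [apply Hk | apply Hl]; lia. }
  pose proof (Htri x y (u (max k l))). lra.
Qed.

Lemma sm_closed_converges (F : X -> Prop) (u : nat -> X) (x : X) :
  sm_closed d F -> (forall n, F (u n)) -> sm_converges d u x -> F x.
Proof.
  intros HF Fu Hux. apply NNPP. intros Fx.
  destruct (HF x Fx) as [r [Hr Hball]].
  destruct (Hux r Hr) as [k Hk].
  exact (Hball (u k) (Hk k (le_n k)) (Fu k)).
Qed.

Lemma sm_closed_seq (F : X -> Prop) :
  (forall u x, (forall n, F (u n)) -> sm_converges d u x -> F x) ->
  sm_closed d F.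
Proof.
  intros HF a Fa. apply NNPP. intros Hno_ball.
  assert (Hnear : forall n : nat, exists x, F x /\ d a x < / INR (S n)).
  { intros n. apply NNPP. intros Hn. apply Hno_ball.
    exists (/ INR (S n)). split; [apply Rinv_0_lt_compat, lt_0_INR; lia|].
    intros x Hx Fx. apply Hn. exists x; auto. }
  set (u n := proj1_sig (constructive_indefinite_description _ (Hnear n))).
  assert (Hu : forall n, F (u n) /\ d a (u n) < / INR (S n)).
  { intros n. exact (proj2_sig (constructive_indefinite_description _ (Hnear n))). }
  apply Fa, (HF u); [apply Hu|].
  intros eps Heps. destruct (inv_INR_S_eventually_lt Heps) as [N HN].
  exists N. intros n Hn. specialize (HN n Hn). destruct (Hu n). lra.
Qed.

End StarMetric.

Theorem theorem4p11 (X : Type) (star : R -> R -> R) (d : X -> X -> R)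
  (Hstar : t_definer star) (Hd : star_metric star d) (Hcomp : sm_complete d)
  (M : X -> Prop) (HM : exists x, M x) :
  sm_complete (restrict_metric M d) <-> sm_closed d M.
Proof.
  (* Cauchy sequences and limits in the subspace are, by unfolding
     [restrict_metric], those of the underlying sequences in [X]. *)
  split.
  - intros HMcomp. apply sm_closed_seq. intros u x Mu Hux.
    set (v n := exist M (u n) (Mu n)).
    destruct (HMcomp v (sm_converges_cauchy Hstar Hd Hux))
      as [[y My] Hvy].
    rewrite (sm_converges_unique Hstar Hd Hux Hvy). exact My.
  - intros HMclosed v Hv.
    destruct (Hcomp (fun n => proj1_sig (v n)) Hv) as [x Hx].
    exists (exist M x (sm_closed_converges HMclosed (fun n => proj2_sig (v n)) Hx)).
    exact Hx.
Qed.
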